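(* For each $n\ge 2$, there are exactly $2^{\aleph_0}$ pairwise non-isomorphic diameter-$4$ perfect Lee codes in $Z^n$.
   Context: Lee distance on $Z^n$: $\rho_L(v,w)=\sum_i|v_i-w_i|$; $S_{n,1}(v)=\{w:\rho_L(v,w)\le1\}$; for $\rho_L(v,w)=1$ the double-sphere is $DS_{n,1}(v,w)=S_{n,1}(v)\cup S_{n,1}(w)$. A copy of a set is its image under a linear distance-preserving bijection of $Z^n$; a tiling is a family of pairwise disjoint copies covering $Z^n$. A diameter-$4$ perfect Lee code in $Z^n$ is a set $\mathcal{L}$ with pairwise Lee distances $\ge 4$ such that there is a tiling of $Z^n$ by copies of $DS_{n,1}$ (the maximum-size anticode of diameter $3$) in which each tile contains exactly one element of $\mathcal{L}$ and distinct tiles contain distinct elements. Two codes are isomorphic if some linear distance-preserving bijection $Z^n\to Z^n$ maps one onto the other. *)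

From mathcomp Require Import all_boot all_order all_algebra.
Set Implicit Arguments. Unset Strict Implicit. Unset Printing Implicit Defensive.
Import Order.TTheory GRing.Theory Num.Theory.
Local Open Scope ring_scope.

Definition Zn (n : nat) := 'rV[int]_n.

Definition lee_dist (n : nat) (v w : Zn n) : int :=
  \sum_(i < n) `|v ord0 i - w ord0 i|.

Definition S1 (n : nat) (v : Zn n) : Zn n -> Prop :=
  fun w => lee_dist v w <= 1.

Definition DS1 (n : nat) (v w : Zn n) : Zn n -> Prop :=
  fun x => S1 v x \/ S1 w x.

Definition is_linear (n : nat) (f : Zn n -> Zn n) : Prop :=
  forall (a : int) (u v : Zn n), f (a *: u + v) = a *: f u + f v.

Definition lin_isometry (n : nat) (f : Zn n -> Zn n) : Prop :=
  [/\ is_linear f, bijective f & forall u v, lee_dist (f u) (f v) = lee_dist u v].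

Definition img (n : nat) (f : Zn n -> Zn n) (A : Zn n -> Prop) : Zn n -> Prop :=
  fun y => exists2 x, A x & f x = y.

Definition DS_copy (n : nat) (T : Zn n -> Prop) : Prop :=
  exists f v w, [/\ lin_isometry f, lee_dist v w = 1 &
                    forall x, T x <-> img f (DS1 v w) x].

Definition DS_tiling (n : nat) (F : (Zn n -> Prop) -> Prop) : Prop :=
  [/\ forall T, F T -> DS_copy T,
      forall T1 T2, F T1 -> F T2 -> T1 <> T2 -> forall x, ~ (T1 x /\ T2 x) &
      forall x, exists2 T, F T & T x].

Definition perfect_lee_code_diam4 (n : nat) (L : Zn n -> Prop) : Prop :=
  (forall c d, L c -> L d -> c <> d -> 4 <= lee_dist c d) /\
  exists F : (Zn n -> Prop) -> Prop,
    [/\ DS_tiling F,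
        (forall T, F T -> exists c, [/\ L c, T c & forall d, L d -> T d -> d = c]) &
        (forall T1 T2 c1 c2, F T1 -> F T2 -> T1 <> T2 ->
            L c1 -> T1 c1 -> L c2 -> T2 c2 -> c1 <> c2)].

Definition iso_codes (n : nat) (L1 L2 : Zn n -> Prop) : Prop :=
  exists f, lin_isometry f /\ forall y, L2 y <-> img f L1 y.

From HB Require Import structures.
From mathcomp Require Import all_boot all_order all_algebra zify ring.
From Stdlib Require Import ClassicalEpsilon FunctionalExtensionality.
Set Implicit Arguments. Unset Strict Implicit. Unset Printing Implicit Defensive.
Import Order.TTheory GRing.Theory Num.Theory.
Local Open Scope ring_scope.

(* For an arbitrary shift s : int -> int, let c be a codeword iff its coordinate
   sum is 4k and its index sum sum_i i c_i is congruent to -s(k) modulo n.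
   Codewords at Lee distance at most 3 lie in the same layer k, and their
   difference has coordinate sum 0, Lee norm at most 3 and index sum divisible
   by n, which forces it to vanish; the translates DS(c, c + e_0) cover Z^n
   layer by layer, so they tile it and the code is perfect.  A linear isometry
   preserves Lee norms, so "M u is a codeword for some unit vector u" is an
   isomorphism invariant; for M = 4n(j+1) it holds iff n divides s(n(j+1)),
   which lets the shifts encode an arbitrary bit sequence.  Since Z^n is
   countable, there are at most continuum many codes. *)

Definition lee_norm n (y : Zn n) : int := \sum_(i < n) `|y ord0 i|.

Definition wsum n (w : 'I_n -> int) (y : Zn n) : int := \sum_(i < n) w i * y ord0 i.

Fact wsum_is_linear n (w : 'I_n -> int) : linear_for *%R (wsum w).
Proof.
move=> a x y; rewrite /wsum mulr_sumr -big_split /=; apply: eq_bigr => i _.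
by rewrite !mxE mulrDr mulrCA.
Qed.

HB.instance Definition _ n (w : 'I_n -> int) :=
  GRing.isSemilinear.Build int (Zn n) int *%R (wsum w)
    (GRing.semilinear_linear (wsum_is_linear w)).

Notation coord_sum := (wsum (fun=> 1)).
Notation index_sum := (wsum (fun i => (i : nat)%:Z)).
Notation "''e_' i" := (delta_mx 0 i) (at level 8, i at level 2, format "''e_' i").

Section LeeNorm.
Variable n : nat.
Implicit Types (x y : Zn n) (i j : 'I_n).

Lemma lee_distE x y : lee_dist x y = lee_norm (y - x).
Proof. by apply: eq_bigr => i _; rewrite !mxE distrC. Qed.

Lemma lee_normN y : lee_norm (- y) = lee_norm y.
Proof. by apply: eq_bigr => i _; rewrite !mxE normrN. Qed.

Lemma lee_normD x y : lee_norm (x + y) <= lee_norm x + lee_norm y.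
Proof.
by rewrite /lee_norm -big_split /=; apply: ler_sum => i _; rewrite !mxE ler_normD.
Qed.

Lemma lee_distC x y : lee_dist x y = lee_dist y x.
Proof. by rewrite !lee_distE -lee_normN opprB. Qed.

Lemma lee_dist_triangle x y z : lee_dist x z <= lee_dist x y + lee_dist y z.
Proof.
rewrite !lee_distE [_ + lee_norm _]addrC.
have -> : z - x = (z - y) + (y - x) by rewrite addrA subrK.
exact: lee_normD.
Qed.

Lemma lee_norm0 : lee_norm (0 : Zn n) = 0.
Proof. by rewrite /lee_norm big1 // => i _; rewrite !mxE. Qed.

Lemma wsum_delta (w : 'I_n -> int) i : wsum w 'e_i = w i.
Proof.
rewrite /wsum (bigD1 i) //= big1 => [|j /negbTE ji]; rewrite !mxE ?ji ?eqxx.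
  by rewrite mulr1 addr0.
by rewrite mulr0.
Qed.

Lemma lee_normZ a y : lee_norm (a *: y) = `|a| * lee_norm y.
Proof. by rewrite /lee_norm mulr_sumr; apply: eq_bigr => i _; rewrite !mxE normrM. Qed.

Lemma lee_norm_delta i : lee_norm ('e_i : Zn n) = 1.
Proof.
by rewrite /lee_norm (bigD1 i) //= big1 => [|j /negbTE ji]; rewrite !mxE ?ji ?eqxx.
Qed.

Lemma coord_sumE y : coord_sum y = \sum_(i < n) y ord0 i.
Proof. by apply: eq_bigr => i _; rewrite mul1r. Qed.

Lemma coord_sum_le_lee_norm y : `|coord_sum y| <= lee_norm y.
Proof. by rewrite coord_sumE ler_norm_sum. Qed.

Lemma lee_norm_coord_sum_parity y : (2 %| lee_norm y - coord_sum y)%Z.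
Proof.
rewrite coord_sumE /lee_norm -sumrB; apply: rpred_sum => i _.
have [y_ge0|y_lt0] := lerP 0 (y ord0 i); first by rewrite ger0_norm // subrr.
by rewrite ltr0_norm //; apply/dvdzP; exists (- y ord0 i); ring.
Qed.

Lemma balanced_nonpos_eq0 y :
  coord_sum y = 0 -> (forall i, y ord0 i <= 0) -> y = 0.
Proof.
rewrite coord_sumE => sum0 y_le0; apply/rowP => i; rewrite mxE; apply/eqP.
rewrite -oppr_eq0; apply/eqP; move: i isT; apply/psumr_eq0P.
  by move=> i _; rewrite oppr_ge0.
by rewrite sumrN sum0 oppr0.
Qed.

Lemma balanced_lee_norm_le3 y : coord_sum y = 0 -> lee_norm y <= 3 ->
  y = 0 \/ exists i j, i != j /\ y = 'e_i - 'e_j.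
Proof.
move=> sum0 norm_le3.
have [i yi_gt0|y_le0] := pickP (fun t => 0 < y ord0 t); last first.
  by left; apply: balanced_nonpos_eq0 => // t; rewrite leNgt y_le0.
have [j yj_lt0|y_ge0] := pickP (fun t => y ord0 t < 0); last first.
  left; apply/eqP; rewrite -oppr_eq0; apply/eqP.
  apply: balanced_nonpos_eq0 => [|t]; first by rewrite linearN /= sum0 oppr0.
  by rewrite mxE oppr_le0 leNgt y_ge0.
have ji : j != i by apply: contraTneq yi_gt0 => <-; rewrite -leNgt ltW.
right; exists i, j; split; first by rewrite eq_sym.
pose P t := (t != i) && (t != j).
have split3 F : \sum_(t < n) F t = F i + F j + \sum_(t | P t) F t :> int.
  by rewrite (bigD1 i) //= (bigD1 j) //= addrA.
have := lee_norm_coord_sum_parity y; move: sum0 norm_le3.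
rewrite coord_sumE /lee_norm !split3.
set S := \sum_(t | P t) y ord0 t; set R := \sum_(t | P t) `|y ord0 t|.
have S_le_R : `|S| <= R by exact: ler_norm_sum.
have R_ge0 : 0 <= R by exact: sumr_ge0.
move=> sum0 norm_le3 /dvdzP [q parity].
have [yi1 yj1 R0] : [/\ y ord0 i = 1, y ord0 j = -1 & R = 0] by split; lia.
apply/rowP => t; rewrite !mxE /=.
have [->|ti] := eqVneq t i; first by rewrite eq_sym (negbTE ji) yi1 subr0.
have [->|tj] := eqVneq t j; first by rewrite yj1 sub0r.
have tP : P t by rewrite /P ti tj.
by rewrite subrr; apply/eqP/normr0P; move: t tP {ti tj}; apply/psumr_eq0P.
Qed.

Lemma balanced_lee_norm_le3_eq0 y :
  coord_sum y = 0 -> (n%:Z %| index_sum y)%Z -> lee_norm y <= 3 -> y = 0.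
Proof.
move=> sum0 dvd_index norm_le3.
have [//|[i [j [ij y_eq]]]] := balanced_lee_norm_le3 sum0 norm_le3.
move: dvd_index; rewrite y_eq linearB /= !wsum_delta => /dvdzP [q ij_eq].
have i_lt := ltn_ord i; have j_lt := ltn_ord j.
by case/eqP: ij; apply: val_inj => /=; case: (ltrgtP q 0) => q_sgn; nia.
Qed.
End LeeNorm.

Lemma DS1_diam n (e p q : Zn n) :
  lee_norm e = 1 -> DS1 0 e p -> DS1 0 e q -> lee_dist p q <= 3.
Proof.
move=> e_unit; have d0e : lee_dist 0 e = 1 by rewrite lee_distE subr0.
have de0 : lee_dist e 0 = 1 by rewrite lee_distC.
rewrite /DS1 /S1 => -[p0|pe] [q0|qe].
- by have := lee_dist_triangle p 0 q; rewrite (lee_distC p 0); lia.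
- have := lee_dist_triangle p 0 q; have := lee_dist_triangle 0 e q.
  by rewrite (lee_distC p 0); lia.
- have := lee_dist_triangle p e q; have := lee_dist_triangle e 0 q.
  by rewrite (lee_distC p e); lia.
- by have := lee_dist_triangle p e q; rewrite (lee_distC p e); lia.
Qed.

Lemma DS1_translate n (c e x : Zn n) : DS1 c (c + e) x <-> DS1 0 e (x - c).
Proof. by rewrite /DS1 /S1 !lee_distE subr0 opprD addrA. Qed.

Lemma lin_isometry_id n : lin_isometry (@id (Zn n)).
Proof. by split => //; exists id. Qed.

Lemma DS_copy_DS1 n (v w : Zn n) : lee_dist v w = 1 -> DS_copy (DS1 v w).
Proof.
move=> vw1; exists id, v, w; split => //; first exact: lin_isometry_id.
by move=> x; split => [|[y ? <-]] //; exists x.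
Qed.

Section PerfectCodeCriterion.
Variables (n : nat) (e : Zn n) (L : Zn n -> Prop).
Hypotheses (e_unit : lee_norm e = 1)
  (L_sep : forall c d, L c -> L d -> lee_dist c d <= 3 -> c = d)
  (L_cover : forall x, exists2 c, L c & DS1 c (c + e) x).

Lemma DS1_codeword_unique c d x :
  L c -> L d -> DS1 c (c + e) x -> DS1 d (d + e) x -> c = d.
Proof.
move=> Lc Ld /DS1_translate xc /DS1_translate xd; apply: L_sep => //.
have := DS1_diam e_unit xd xc; rewrite !lee_distE.
by have -> : x - c - (x - d) = d - c by rewrite opprB addrC addrA subrK.
Qed.

Lemma DS1_center c : DS1 c (c + e) c.
Proof. by left; rewrite /S1 lee_distE subrr lee_norm0. Qed.

Lemma perfect_code_of_DS1_cover : perfect_lee_code_diam4 L.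
Proof.
split=> [c d Lc Ld cd|].
  by rewrite leNgt; apply/negP => lt4; apply: cd (L_sep Lc Ld _); lia.
exists (fun T => exists2 c, L c & T = DS1 c (c + e)); split.
- split.
  + by move=> _ [c _ ->]; apply: DS_copy_DS1; rewrite lee_distE addrC addKr.
  + move=> _ _ [c1 Lc1 ->] [c2 Lc2 ->] T12 x [x1 x2]; apply: T12.
    by rewrite (DS1_codeword_unique Lc1 Lc2 x1 x2).
  + move=> x; have [c Lc xc] := L_cover x.
    by exists (DS1 c (c + e)); first exists c.
- move=> _ [c Lc ->]; exists c; split=> [||d Ld dc] //; first exact: DS1_center.
  exact: DS1_codeword_unique Ld Lc (DS1_center d) dc.
- move=> _ _ c1 c2 [d1 Ld1 ->] [d2 Ld2 ->] T12 Lc1 c1d1 Lc2 c2d2 c12.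
  apply: T12; subst c2.
  rewrite (DS1_codeword_unique Ld1 Lc1 c1d1 (DS1_center c1)).
  by rewrite (DS1_codeword_unique Ld2 Lc1 c2d2 (DS1_center c1)).
Qed.

End PerfectCodeCriterion.

Lemma exists_ord_congr n (z : int) : (0 < n)%N ->
  exists i : 'I_n, (n%:Z %| z - (i : nat)%:Z)%Z.
Proof.
move=> n_gt0; have r_lt : (absz (z %% n)%Z < n)%N by lia.
exists (Ordinal r_lt); apply/dvdzP; exists (z %/ n)%Z => /=.
rewrite gez0_abs ?modz_ge0 -?lt0n //; lia.
Qed.

Lemma DS1_point n (i0 : 'I_n) (b : bool) (t z : int) : t * t = 1 ->
  exists p, [/\ DS1 0 'e_i0 p, coord_sum p = b%:R + t
             & (n%:Z %| z - index_sum p)%Z].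
Proof.
move=> t2; have norm_t : `|t| = 1 by lia.
have n_gt0 : (0 < n)%N := leq_ltn_trans (leq0n i0) (ltn_ord i0).
(* Since t * t = 1, choosing k = t (z - b i0) mod n gives index sum z mod n. *)
have [k zk] := exists_ord_congr (t * (z - b%:R * (i0 : nat)%:Z)) n_gt0.
exists (b%:R *: 'e_i0 + t *: 'e_k); split.
- rewrite /DS1 /S1 !lee_distE; case: b {zk} => /=.
    by right; rewrite scale1r addrC addKr lee_normZ lee_norm_delta norm_t.
  by left; rewrite scale0r add0r subr0 lee_normZ lee_norm_delta norm_t.
- by rewrite linearD !linearZ /= !wsum_delta !mulr1.
- rewrite linearD !linearZ /= !wsum_delta.
  have -> : z - (b%:R * (i0 : nat)%:Z + t * (k : nat)%:Z) =
            t * (t * (z - b%:R * (i0 : nat)%:Z) - (k : nat)%:Z).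
    by rewrite mulrBr mulrA t2 mul1r; ring.
  exact: dvdz_mull.
Qed.

Lemma DS1_point_at_level n (i0 : 'I_n) (l z : int) : -1 <= l <= 2 ->
  exists p, [/\ DS1 0 'e_i0 p, coord_sum p = l & (n%:Z %| z - index_sum p)%Z].
Proof.
move=> l_range; have [b [t [-> t2]]] : exists (b : bool) t, l = b%:R + t /\ t * t = 1.
  have : l = -1 \/ l = 0 \/ l = 1 \/ l = 2 by lia.
  by case=> [->|[->|[->|->]]];
    [exists false, (-1) | exists true, (-1) | exists false, 1 | exists true, 1].
exact: DS1_point.
Qed.

Definition layered_code n (s : int -> int) (c : Zn n) : Prop :=
  (4 %| coord_sum c)%Z /\ (n%:Z %| index_sum c + s (coord_sum c %/ 4)%Z)%Z.

Section LayeredCode.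
Variables (n : nat) (s : int -> int).
Implicit Types c d x : Zn n.

Lemma layered_code_sep c d :
  layered_code s c -> layered_code s d -> lee_dist c d <= 3 -> c = d.
Proof.
case=> c4 cn [d4 dn]; rewrite lee_distE => le3.
have sum_eq : coord_sum d = coord_sum c.
  have := coord_sum_le_lee_norm (d - c); rewrite linearB /=.
  by case/dvdzP: (rpredB d4 c4) => q dc; lia.
apply/eqP; rewrite eq_sym -subr_eq0; apply/eqP/balanced_lee_norm_le3_eq0 => //.
  by rewrite linearB /= sum_eq subrr.
by move: (rpredB dn cn); rewrite linearB /= sum_eq opprD addrACA subrr addr0.
Qed.

Lemma layered_code_cover (i0 : 'I_n) x :
  exists2 c, layered_code s c & DS1 c (c + 'e_i0) x.
Proof.
pose k := ((coord_sum x + 1) %/ 4)%Z.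
have l_range : -1 <= coord_sum x - 4 * k <= 2 by rewrite /k; lia.
have [p [xp p_sum p_index]] := DS1_point_at_level i0 (index_sum x + s k) l_range.
exists (x - p); last by apply/DS1_translate; rewrite subKr.
have sum_xp : coord_sum (x - p) = 4 * k by rewrite linearB /= p_sum; ring.
split; rewrite sum_xp; first exact: dvdz_mulr.
have -> : (4 * k %/ 4)%Z = k by lia.
by rewrite linearB /= addrAC.
Qed.

End LayeredCode.

Lemma layered_code_perfect n (s : int -> int) : (0 < n)%N ->
  perfect_lee_code_diam4 (@layered_code n s).
Proof.
move=> n_gt0; apply: (perfect_code_of_DS1_cover (lee_norm_delta (Ordinal n_gt0))).
  exact: layered_code_sep.
exact: layered_code_cover.
Qed.

Section LinearIsometry.
Variables (n : nat) (f : Zn n -> Zn n).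

Lemma is_linear0 : is_linear f -> f 0 = 0.
Proof.
move=> f_lin; have := f_lin 1 0 0; rewrite !scale1r addr0 => f00.
by apply: (addrI (f 0)); rewrite addr0 -f00.
Qed.

Lemma is_linearZ a u : is_linear f -> f (a *: u) = a *: f u.
Proof. by move=> f_lin; rewrite -[a *: u]addr0 f_lin (is_linear0 f_lin) addr0. Qed.

Lemma lin_isometry_lee_norm u : lin_isometry f -> lee_norm (f u) = lee_norm u.
Proof.
by case=> f_lin _ f_iso; have := f_iso 0 u; rewrite (is_linear0 f_lin) !lee_distE !subr0.
Qed.

End LinearIsometry.

Definition has_axis_point n (M : int) (L : Zn n -> Prop) : Prop :=
  exists2 u, lee_norm u = 1 & L (M *: u).

Lemma has_axis_point_iso n M (L1 L2 : Zn n -> Prop) :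
  iso_codes L1 L2 -> has_axis_point M L1 <-> has_axis_point M L2.
Proof.
case=> f [f_iso L12]; have [f_lin [g fK gK] _] := f_iso; split.
  case=> u u1 L1u; exists (f u); first by rewrite lin_isometry_lee_norm.
  by apply/L12; exists (M *: u); rewrite ?is_linearZ.
case=> u u1 /L12 [v L1v fv]; exists (g u).
  by rewrite -(lin_isometry_lee_norm (g u) f_iso) gK.
by rewrite -(can_inj fK (_ : f v = f (M *: g u))) // is_linearZ // gK.
Qed.

Lemma unit_coord_sum n (u : Zn n) :
  lee_norm u = 1 -> coord_sum u = 1 \/ coord_sum u = -1.
Proof.
move=> u1; have := coord_sum_le_lee_norm u; have := lee_norm_coord_sum_parity u.
by rewrite u1 => /dvdzP [q]; lia.
Qed.

Lemma layered_code_axis n s (K : int) (u : Zn n) : (n%:Z %| K)%Z ->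
  layered_code s ((4 * K) *: u) <-> (n%:Z %| s (K * coord_sum u))%Z.
Proof.
move=> nK; rewrite /layered_code !linearZ /=.
have -> : (4 * K * coord_sum u %/ 4)%Z = K * coord_sum u by lia.
rewrite rpredDl; last by rewrite -mulrA mulrCA dvdz_mulr.
by split=> [[]|] //; split=> //; rewrite -mulrA dvdz_mulr.
Qed.

(* Negative layers get shift 1, so that -M e_i is never a codeword. *)
Definition shift_of n (a : nat -> bool) (k : int) : int :=
  (~~ [&& 0 < k, (n %| absz k)%N & a (absz k %/ n).-1])%:R.

Lemma has_axis_point_layered_code n (a : nat -> bool) j : (1 < n)%N ->
  has_axis_point (4 * (n * j.+1)%N%:Z) (@layered_code n (shift_of n a)) <-> a j.
Proof.
move=> n_gt1; have n_gt0 := ltnW n_gt1; set K := (n * j.+1)%N.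
have nK : (n%:Z %| K%:Z)%Z by rewrite /K PoszM dvdz_mulr.
have n_ndvd1 : ~~ (n%:Z %| 1)%Z by rewrite dvdz1; lia.
have shiftK : shift_of n a K = (~~ a j)%:R.
  by rewrite /shift_of /= /K dvdn_mulr // ltz_nat muln_gt0 n_gt0 mulKn.
have shiftNK : shift_of n a (- K%:Z) = 1.
  by rewrite /shift_of; have -> : (0 < - K%:Z) = false by lia.
split=> [[u /unit_coord_sum [] sum_u]|aj].
- rewrite layered_code_axis // sum_u mulr1 shiftK.
  by case: (a j) n_ndvd1 => // /negP.
- by rewrite layered_code_axis // sum_u mulrN1 shiftNK => /(negP n_ndvd1).
- exists 'e_(Ordinal n_gt0); first exact: lee_norm_delta.
  by rewrite layered_code_axis // wsum_delta mulr1 shiftK aj.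
Qed.

Lemma layered_code_iso_inj n (a b : nat -> bool) : (1 < n)%N ->
  iso_codes (@layered_code n (shift_of n a)) (layered_code (shift_of n b)) -> a = b.
Proof.
move=> n_gt1 iso_ab; apply: functional_extensionality => j.
have ha := has_axis_point_layered_code a j n_gt1.
have hb := has_axis_point_layered_code b j n_gt1.
have hab := has_axis_point_iso (4 * (n * j.+1)%N%:Z) iso_ab.
by apply/idP/idP => [/ha/hab/hb | /hb/hab/ha].
Qed.

Lemma iso_codes_ext n (L1 L2 : Zn n -> Prop) :
  (forall x, L1 x <-> L2 x) -> iso_codes L1 L2.
Proof.
move=> L12; exists id; split=> [|y]; first exact: lin_isometry_id.
by split=> [/L12 L2y|[x /L12 L2x <-]] //; exists y.
Qed.

Lemma countable_pred_coding (T : countType) :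
  exists g : (T -> Prop) -> nat -> bool,
    forall A B, g A = g B -> forall x, A x <-> B x.
Proof.
exists (fun A k => if unpickle k is Some x
                   then if excluded_middle_informative (A x) then true else false
                   else false).
move=> A B gAB x; have /= := congr1 (fun h => h (pickle x)) gAB.
by rewrite pickleK; do 2![case: excluded_middle_informative => //].
Qed.

Theorem theorem8 (n : nat) (hn : (2 <= n)%N) :
  (exists C : (nat -> bool) -> (Zn n -> Prop),
      (forall a, perfect_lee_code_diam4 (C a)) /\
      (forall a b, iso_codes (C a) (C b) -> a = b)) /\
  (exists g : (Zn n -> Prop) -> (nat -> bool),
      forall L1 L2, perfect_lee_code_diam4 L1 -> perfect_lee_code_diam4 L2 ->
        g L1 = g L2 -> iso_codes L1 L2).
Proof.
split.
  exists (fun a => @layered_code n (shift_of n a)); split.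
    by move=> a; apply/layered_code_perfect/ltnW.
  by move=> a b; apply: layered_code_iso_inj.
have [g g_inj] := countable_pred_coding (Zn n).
by exists g => L1 L2 _ _ gL; apply: iso_codes_ext; exact: g_inj.
Qed.
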